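(* Let $q$ be a prime power, $1\le k$, $k+1<n\le m$, let $g_1,\dots,g_n\in\mathbb{F}_{q^m}$ be linearly independent over $\mathbb{F}_q$, and let $\mathcal{G}$ be the Gabidulin code of dimension $k$ with respect to $g_1,\dots,g_n$. Let $f(x)=x^{q^{k+1}}-a_1x^{q^k}+\sum_{i=0}^{k-1}c_ix^{q^i}$ with $a_1,c_i\in\mathbb{F}_{q^m}$, and $\sigma_f=(f(g_1),\dots,f(g_n))$. Then $\sigma_f$ is not a deep hole of $\mathcal{G}$ in the Hamming metric (i.e. $d_H(\sigma_f,\mathcal{G})\neq n-k$) if and only if there exist $k+1$ distinct elements $g_{i_1},\dots,g_{i_{k+1}}$ of $\{g_1,\dots,g_n\}$ such that $$a_1=\frac{\det\mathcal{R}_k(g_{i_1},\dots,g_{i_{k+1}})}{\det M_{k+1}(g_{i_1},\dots,g_{i_{k+1}})}.$$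
   Context: For $\beta_1,\dots,\beta_s\in\mathbb{F}_{q^m}$, the $t\times s$ Moore matrix $M_t(\beta_1,\dots,\beta_s)$ has $(i,j)$ entry $\beta_j^{q^{i-1}}$, $1\le i\le t$. $\mathcal{R}_k(\beta_1,\dots,\beta_{k+1})$ is the $(k+1)\times(k+1)$ matrix obtained from $M_{k+2}(\beta_1,\dots,\beta_{k+1})$ by deleting the row $(\beta_1^{q^k},\dots,\beta_{k+1}^{q^k})$. $\mathcal{L}_q(x,\mathbb{F}_{q^m})$ is the set of $q$-linearized polynomials $\sum_i a_ix^{q^i}$ over $\mathbb{F}_{q^m}$, with $q$-degree the largest $i$ with $a_i\ne0$. $d_H$ is Hamming distance, $d_H(\mathbf{u},C)=\min_{\mathbf{c}\in C}d_H(\mathbf{u},\mathbf{c})$; a deep hole in the Hamming metric is a word attaining the maximum of $d_H(\cdot,C)$, which for $\mathcal{G}$ is $n-k$. The Gabidulin code of dimension $k$ is $\mathcal{G}=\{(v(g_1),\dots,v(g_n)) : v\in\mathcal{L}_q(x,\mathbb{F}_{q^m}),\ v=0\text{ or }\deg_q(v)<k\}$. *)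

From HB Require Import structures.
From mathcomp Require Import all_boot all_order all_algebra all_field.
Set Implicit Arguments. Unset Strict Implicit. Unset Printing Implicit Defensive.
Import GRing.Theory.
Local Open Scope ring_scope.

Definition prime_power (q : nat) : Prop :=
  exists p e : nat, [/\ prime p, (0 < e)%N & q = (p ^ e)%N].

(* F_q-linear independence of g_1..g_n in L, where F_q = {x | x^q = x}
   is the subfield of order q of L (|L| = q^m). *)
Definition Fq_lin_indep (L : fieldType) (q n : nat) (g : 'I_n -> L) : Prop :=
  forall c : 'I_n -> L, (forall i, c i ^+ q = c i) ->
    \sum_(i < n) c i * g i = 0 -> forall i, c i = 0.

Definition linev (L : fieldType) (q k : nat) (a : 'I_k -> L) (x : L) : L :=
  \sum_(i < k) a i * x ^+ (q ^ nat_of_ord i)%N.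

Definition dH (L : fieldType) (n : nat) (u v : 'I_n -> L) : nat :=
  #|[set i : 'I_n | u i != v i]|.

(* Gabidulin codeword for v = sum_{i<k} a_i x^{q^i} (covers v = 0 or deg_q v < k) *)
Definition gab_word (L : fieldType) (q k n : nat) (g : 'I_n -> L)
  (a : 'I_k -> L) : 'I_n -> L := fun j => linev q a (g j).

Definition dH_gab (L : finFieldType) (q k n : nat) (g : 'I_n -> L)
  (u : 'I_n -> L) : nat :=
  \big[minn/n]_(a : {ffun 'I_k -> L}) dH u (gab_word q g a).

Definition moore (L : fieldType) (q t s : nat) (b : 'I_s -> L) : 'M[L]_(t, s) :=
  \matrix_(i < t, j < s) b j ^+ (q ^ nat_of_ord i)%N.

(* R_k(b_1..b_{k+1}): M_{k+2} with the row of exponent q^k deleted *)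
Definition moore_R (L : fieldType) (q k : nat) (b : 'I_k.+1 -> L) : 'M[L]_k.+1 :=
  \matrix_(i < k.+1, j < k.+1) b j ^+ (q ^ (if (nat_of_ord i < k)%N then nat_of_ord i else k.+1))%N.

Definition fpoly (L : fieldType) (q k : nat) (a1 : L) (c : 'I_k -> L) (x : L) : L :=
  x ^+ (q ^ k.+1) - a1 * x ^+ (q ^ k) + linev q c x.

From HB Require Import structures.
From mathcomp Require Import all_boot all_order all_algebra all_field.
From mathcomp Require Import ring zify.
Set Implicit Arguments.
Unset Strict Implicit.
Unset Printing Implicit Defensive.

Import GRing.Theory.
Local Open Scope ring_scope.

(* Interpolation by linearized polynomials of q-degree < t works on any t
   F_q-independent points, because their Moore matrix is invertible.  Hence
   sigma_f always agrees with a codeword on k positions, so d_H <= n - k, and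
   it agrees with one on k+1 positions g_(s j) iff f coincides there with a
   polynomial of q-degree < k.  Writing x^(q^(k+1)) on these points as the
   interpolant sum_(i<=k) x_i x^(q^i), this happens iff a_1 = x_k, and Cramer's
   rule gives x_k = det R_k / det M_(k+1). *)

Lemma wide_mx_ker (F : fieldType) r t (A : 'M[F]_(t, r)) :
  (r < t)%N -> exists2 w : 'rV_t, w != 0 & w *m A = 0.
Proof.
move=> ltrt; have : kermx A != 0.
  rewrite kermx_eq0 /row_free; apply: contraTneq (rank_leq_col A) => ->.
  by rewrite -ltnNge.
by case/rowV0Pn=> w /sub_kermxP wA w0; exists w.
Qed.

Lemma linev_recr (L : fieldType) q k (x : 'I_k.+1 -> L) z :
  linev q x z = linev q (fun i => x (widen_ord (leqnSn k) i)) z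
                + x ord_max * z ^+ (q ^ k).
Proof. by rewrite /linev big_ord_recr. Qed.

Lemma mulmx_moore (L : fieldType) q t s (b : 'I_s -> L) (v : 'rV_t) j :
  (v *m moore q t b) 0 j = linev q (fun i => v 0 i) (b j).
Proof. by rewrite mxE; apply: eq_bigr => i _; rewrite mxE. Qed.

Section Frobenius.

Variables (L : fieldType) (q : nat).
Hypothesis q_gt0 : (0 < q)%N.
Hypothesis exprqD : forall x y : L, (x + y) ^+ q = x ^+ q + y ^+ q.

Lemma exprq_sum I (r : seq I) (P : pred I) (F : I -> L) :
  (\sum_(i <- r | P i) F i) ^+ q = \sum_(i <- r | P i) F i ^+ q.
Proof. by apply: (big_morph (fun x : L => x ^+ q)) => //; rewrite expr0n gtn_eqF. Qed.

Lemma Fq_lin_indep_comp n t (g : 'I_n -> L) (s : 'I_t -> 'I_n) :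
  injective s -> Fq_lin_indep q g -> Fq_lin_indep q (g \o s).
Proof.
move=> s_inj hg c cq csum j.
pose C i := \sum_(l < t | s l == i) c l.
have Cs l : C (s l) = c l.
  by rewrite /C (big_pred1 l) // => l'; rewrite /= inj_eq.
have Cq i : C i ^+ q = C i by rewrite exprq_sum; apply: eq_bigr => l _.
rewrite -Cs; apply: hg => //; rewrite -{}[RHS]csum /C.
rewrite (partition_big s xpredT) //=; apply: eq_bigr => i _.
by rewrite mulr_suml; apply: eq_bigr => l /eqP <-.
Qed.

Variables (t : nat) (b : 'I_t -> L).

Lemma moore_rows_span r (e : 'I_r -> L) :
  (forall j, b j ^+ (q ^ r) = linev q e (b j)) ->
  forall N, exists f : 'I_r -> L, forall j, b j ^+ (q ^ N) = linev q f (b j).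
Proof.
move=> he.
have low N : (N <= r)%N -> exists f : 'I_r -> L,
    forall j, b j ^+ (q ^ N) = linev q f (b j).
  rewrite leq_eqVlt => /orP [/eqP -> | ltNr]; first by exists e.
  exists (fun i => (i == Ordinal ltNr)%:R) => j.
  rewrite /linev (bigD1 (Ordinal ltNr)) //= eqxx mul1r big1 ?addr0 // => i /negbTE->.
  by rewrite mul0r.
have [F hF] := fin_all_exists (fun i : 'I_r => low i.+1 (ltn_ord i)).
elim=> [|N [f hf]]; first exact: low.
exists (fun l => \sum_(i < r) f i ^+ q * F i l) => j.
rewrite expnSr exprM hf /linev exprq_sum.
under eq_bigr => i _ do rewrite exprMn -exprM -expnSr hF /linev mulr_sumr.
rewrite exchange_big /=; apply: eq_bigr => l _; rewrite mulr_suml.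
by apply: eq_bigr => i _; rewrite mulrA.
Qed.

Definition moore_null (y : 'I_t -> L) :=
  forall i : nat, \sum_(j < t) y j * b j ^+ (q ^ i) = 0.

Lemma moore_null_of_span r (y : 'I_t -> L) :
  (forall N, exists f : 'I_r -> L, forall j, b j ^+ (q ^ N) = linev q f (b j)) ->
  (forall i : 'I_r, \sum_(j < t) y j * b j ^+ (q ^ i) = 0) -> moore_null y.
Proof.
move=> span y0 N; have [f hf] := span N.
under eq_bigr do rewrite hf /linev mulr_sumr.
rewrite exchange_big big1 // => i _.
under eq_bigr do rewrite mulrCA.
by rewrite -mulr_sumr y0 mulr0.
Qed.

Lemma moore_nullMr y a : moore_null y -> moore_null (fun j => y j * a).
Proof.
by move=> y0 i; under eq_bigr do rewrite mulrAC; rewrite -mulr_suml y0 mul0r.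
Qed.

Lemma moore_nullB y y' :
  moore_null y -> moore_null y' -> moore_null (fun j => y j - y' j).
Proof.
by move=> y0 y'0 i; under eq_bigr do rewrite mulrBl; rewrite sumrB y0 y'0 subr0.
Qed.

Variable m : nat.
Hypothesis m_gt0 : (0 < m)%N.
Hypothesis expr_qm : forall x : L, x ^+ (q ^ m) = x.

(* Raising to the power q permutes the rows b^(q^i) cyclically, as q^m acts trivially. *)
Lemma moore_null_exprq y : moore_null y -> moore_null (fun j => y j ^+ q).
Proof.
move=> y0 i.
have e : (q ^ (i + m).-1 * q = q ^ m * q ^ i)%N.
  by rewrite -expnSr prednK ?addn_gt0 ?m_gt0 ?orbT // expnD mulnC.
transitivity ((\sum_(j < t) y j * b j ^+ (q ^ (i + m).-1)) ^+ q).
  rewrite exprq_sum; apply: eq_bigr => j _.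
  by rewrite exprMn -exprM e exprM expr_qm.
by rewrite y0 expr0n gtn_eqF.
Qed.

Hypothesis b_indep : Fq_lin_indep q b.

(* Normalize a minimal counterexample y so that y j = 1; then y^q - y is a
   smaller one, so y has coefficients in F_q, contradicting independence. *)
Lemma moore_null_eq0 y : moore_null y -> forall j, y j = 0.
Proof.
move: {2}#|_| (leqnn #|[set j | y j != 0]|) => N.
elim: N y => [|N IH] y supp y0 j; apply/eqP/negPn/negP => yj0.
  by move: supp; rewrite leqn0 cards_eq0 => /eqP/setP/(_ j); rewrite !inE yj0.
pose z l := y l * (y j)^-1.
have z0 : moore_null z by apply: moore_nullMr.
have zj : z j = 1 by rewrite /z divff.
pose w l := z l ^+ q - z l.
have w_eq0 l : w l = 0.
  apply: IH l; last by apply: moore_nullB; [apply: moore_null_exprq|].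
  apply: (@leq_trans #|[set l | y l != 0] :\ j|); last first.
    by move: supp; rewrite (cardsD1 j) inE yj0 add1n ltnS.
  apply/subset_leq_card/subsetP => l; rewrite !inE; apply: contraNT.
  case/nandP=> [/negPn/eqP -> | /negPn/eqP yl0]; first by rewrite /w zj expr1n subrr.
  by rewrite /w /z yl0 mul0r expr0n gtn_eqF ?subrr.
have zq l : z l ^+ q = z l by apply/subr0_eq/w_eq0.
have zsum : \sum_(l < t) z l * b l = 0.
  by rewrite -[RHS](z0 0%N); apply: eq_bigr => l _; rewrite expn0 expr1.
by move: (b_indep zq zsum j) => /eqP; rewrite zj oner_eq0.
Qed.

Lemma linev_indep_eq0 r (x : 'I_r -> L) : (r <= t)%N ->
  (forall j, linev q x (b j) = 0) -> forall i, x i = 0.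
Proof.
elim: r x => [|r IH] x ltrt x0; first by case.
have [xr0 | xr_nz] := eqVneq (x ord_max) 0.
  have low : forall i : 'I_r, x (widen_ord (leqnSn r) i) = 0.
    apply: (IH (fun i => x (widen_ord (leqnSn r) i)) (ltnW ltrt)) => j.
    by move: (x0 j); rewrite linev_recr xr0 mul0r addr0.
  move=> i; case: (unliftP ord_max i) => [i' -> | ->] //.
  by rewrite -(low i'); congr x; apply: val_inj; exact: lift_max.
(* Otherwise row r, hence every row, is spanned by the r < t rows below it,
   and a vector orthogonal to those contradicts [moore_null_eq0]. *)
pose e i := - x (widen_ord (leqnSn r) i) / x ord_max.
have he j : b j ^+ (q ^ r) = linev q e (b j).
  move: (x0 j); rewrite linev_recr /linev => /eqP; rewrite addr_eq0 => /eqP h.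
  rewrite /e; under eq_bigr do rewrite !mulNr mulrAC.
  by rewrite sumrN -mulr_suml h mulNr opprK mulrC mulKf.
have [w w_nz w0] := wide_mx_ker (moore q r b)^T ltrt.
have w_null : moore_null (fun j => w 0 j).
  apply: (moore_null_of_span (moore_rows_span he)) => i.
  have := congr1 (fun v : 'rV_r => v 0 i) w0; rewrite !mxE => wi.
  by rewrite -[RHS]wi; apply: eq_bigr => j _; rewrite !mxE.
case/eqP: w_nz; apply/rowP => j; rewrite mxE.
exact: moore_null_eq0 w_null j.
Qed.

Lemma moore_unit : moore q t b \in unitmx.
Proof.
rewrite unitmxE unitfE; apply/negP => /det0P [w w_nz w0].
case/eqP: w_nz; apply/rowP => i; rewrite mxE.
apply: (@linev_indep_eq0 _ (fun i => w 0 i) (leqnn t)) => j.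
by rewrite -mulmx_moore w0 mxE.
Qed.

End Frobenius.

Section Interpolation.

Variables (L : fieldType) (q t : nat) (b : 'I_t -> L).
Hypothesis b_moore : moore q t b \in unitmx.

Lemma moore_interpolate (v : 'I_t -> L) :
  exists d : 'I_t -> L, forall j, linev q d (b j) = v j.
Proof.
exists (fun i => (\row_j v j *m invmx (moore q t b)) 0 i) => j.
by rewrite -mulmx_moore mulmxKV // mxE.
Qed.

Lemma moore_linev_inj (x y : 'I_t -> L) :
  (forall j, linev q x (b j) = linev q y (b j)) -> forall i, x i = y i.
Proof.
move=> xy i; have : \row_i x i *m moore q t b = \row_i y i *m moore q t b.
  apply/rowP => j; rewrite !mulmx_moore /linev.
  by under eq_bigr do rewrite mxE; under [RHS]eq_bigr do rewrite mxE; apply: xy.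
move/(congr1 (mulmx^~ (invmx (moore q t b)))); rewrite !mulmxK //.
by move/rowP/(_ i); rewrite !mxE.
Qed.

End Interpolation.

Lemma det_moore_R (L : fieldType) q k (b x : 'I_k.+1 -> L) :
  (forall j, b j ^+ (q ^ k.+1) = linev q x (b j)) ->
  \det (moore_R q b) = x ord_max * \det (moore q k.+1 b).
Proof.
move=> hx.
pose E := \matrix_(i < k.+1, j < k.+1) if (i < k)%N then (i == j)%:R else x j.
have -> : moore_R q b = E *m moore q k.+1 b.
  apply/matrixP => i j; rewrite !mxE; case: ifP => ltik.
    rewrite (bigD1 i) //= !mxE ltik eqxx mul1r big1 ?addr0 // => l /negbTE.
    by rewrite !mxE ltik eq_sym => ->; rewrite mul0r.
  by rewrite hx; apply: eq_bigr => l _; rewrite !mxE ltik.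
rewrite det_mulmx det_trig; last first.
  apply/is_trig_mxP => i j ltij; rewrite mxE ifT; last by rewrite (leq_trans ltij) // -ltnS.
  by rewrite -val_eqE ltn_eqF.
rewrite big_ord_recr /= big1 ?mul1r; first by rewrite mxE ltnn.
by move=> i _; rewrite mxE /= ltn_ord eqxx.
Qed.

Lemma fpoly_eq_linev_iff (L : fieldType) q k (b : 'I_k.+1 -> L) a1 (c : 'I_k -> L) :
  moore q k.+1 b \in unitmx ->
  (exists d : 'I_k -> L, forall j, fpoly q a1 c (b j) = linev q d (b j)) <->
  a1 = \det (moore_R q b) / \det (moore q k.+1 b).
Proof.
move=> b_moore.
have [x hx] := moore_interpolate b_moore (fun j => b j ^+ (q ^ k.+1)).
have detM : \det (moore q k.+1 b) != 0 by rewrite -unitfE -unitmxE.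
rewrite (det_moore_R (fun j => esym (hx j))) mulfK //.
have widen_lift (i : 'I_k) : widen_ord (leqnSn k) i = lift ord_max i.
  exact/val_inj/esym/lift_max.
split=> [[d hd] | ->].
  pose y i := if unlift ord_max i is Some i' then d i' - c i' else a1.
  have <- : y ord_max = a1 by rewrite /y unlift_none.
  apply: (moore_linev_inj b_moore) => j; rewrite hx linev_recr /y unlift_none.
  have -> : linev q (fun i => y (widen_ord (leqnSn k) i)) (b j)
            = linev q d (b j) - linev q c (b j).
    by rewrite /linev -sumrB; apply: eq_bigr => i _; rewrite /y widen_lift liftK mulrBl.
  by rewrite -hd /fpoly; ring.
exists (fun i => x (widen_ord (leqnSn k) i) + c i) => j.
rewrite /fpoly -hx linev_recr addrK /linev -big_split /=.
by apply: eq_bigr => i _; rewrite mulrDl.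
Qed.

Lemma dH_le_agree (L : fieldType) n t (s : 'I_t -> 'I_n) (u v : 'I_n -> L) :
  injective s -> (forall j, u (s j) = v (s j)) -> (dH u v <= n - t)%N.
Proof.
move=> s_inj uv; have disagree : [set i | u i != v i] \subset ~: (s @: setT).
  by apply/subsetP => i; rewrite !inE; apply: contra => /imsetP [j _ ->]; rewrite uv.
apply: (leq_trans (subset_leq_card disagree)).
by rewrite cardsCs setCK card_imset // cardsT !card_ord.
Qed.

Lemma agree_of_dH_lt (L : fieldType) n t (u v : 'I_n -> L) :
  (dH u v < n - t)%N ->
  exists2 s : 'I_t.+1 -> 'I_n, injective s & forall j, u (s j) = v (s j).
Proof.
move=> lt_dH; set A := [set i | u i == v i].
have ltAt : (t < #|A|)%N.
  have : #|~: A| = dH u v by apply: eq_card => i; rewrite !inE.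
  by move: (cardsC A); rewrite card_ord; lia.
have i0 : 'I_n by apply: (@Ordinal n 0); lia.
exists (fun j : 'I_t.+1 => nth i0 (enum A) j).
  move=> j1 j2 /eqP; rewrite nth_uniq ?enum_uniq -?cardE ?(leq_trans (ltn_ord _)) //.
  by move/eqP/val_inj.
move=> j; have : nth i0 (enum A) j \in A.
  by rewrite -mem_enum mem_nth // -cardE (leq_trans (ltn_ord j)).
by rewrite inE => /eqP.
Qed.

Lemma bigminn_le (T : finType) n (F : T -> nat) a :
  (\big[minn/n]_(x : T) F x <= F a)%N.
Proof.
elim: (index_enum T) (mem_index_enum a) => // x s IH.
rewrite inE big_cons => /predU1P [-> | /IH]; first exact: geq_minl.
exact: leq_trans (geq_minr _ _).
Qed.

Lemma bigminn_lt_ex (T : finType) n N (F : T -> nat) : (N <= n)%N ->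
  (\big[minn/n]_(x : T) F x < N)%N -> exists a, (F a < N)%N.
Proof.
move=> leNn; apply: (big_ind (fun x => (x < N)%N -> exists a, (F a < N)%N)).
- by rewrite ltnNge leNn.
- by move=> x y hx hy; rewrite /minn; case: ifP.
- by move=> a _ lt_aN; exists a.
Qed.

Section GabidulinDistance.

Variables (L : finFieldType) (q k n : nat) (g : 'I_n -> L) (u : 'I_n -> L).

Lemma gab_wordE (d : 'I_k -> L) j : gab_word q g [ffun i => d i] j = linev q d (g j).
Proof. by apply: eq_bigr => i _; rewrite ffunE. Qed.

Lemma dH_gab_le_agree t (s : 'I_t -> 'I_n) (d : 'I_k -> L) : injective s ->
  (forall j, u (s j) = linev q d (g (s j))) -> (dH_gab q k g u <= n - t)%N.
Proof.
move=> s_inj agree; apply: leq_trans (bigminn_le _ _ [ffun i => d i]) _.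
by apply: dH_le_agree s_inj _ => j; rewrite gab_wordE.
Qed.

Lemma dH_gab_lt_agree t : (dH_gab q k g u < n - t)%N ->
  exists2 s : 'I_t.+1 -> 'I_n, injective s &
    exists d : 'I_k -> L, forall j, u (s j) = linev q d (g (s j)).
Proof.
case/(bigminn_lt_ex (leq_subr _ _)) => a /agree_of_dH_lt [s s_inj agree].
by exists s => //; exists (fun i => a i) => j; rewrite agree -gab_wordE ffunK.
Qed.

End GabidulinDistance.

Lemma prime_power_gt0 q : prime_power q -> (0 < q)%N.
Proof. by case=> p [e [/prime_gt0 p_gt0 _ ->]]; rewrite expn_gt0 p_gt0. Qed.

Lemma prime_power_exprD (L : finFieldType) q m :
  prime_power q -> #|L| = (q ^ m)%N -> forall x y : L, (x + y) ^+ q = x ^+ q + y ^+ q.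
Proof.
case=> p [e [p_pr _ ->]] cardL x y; apply: exprDn_pchar.
have pL : p \in [pchar L] by apply: (@card_finPcharP _ p (e * m)); rewrite // cardL expnM.
by rewrite (eq_pnat _ (pcharf_eq pL)) pnatX pnat_id.
Qed.

Theorem lemma4 (L : finFieldType) (q m k n : nat)
  (hq : prime_power q) (hL : #|L| = (q ^ m)%N)
  (hk : (1 <= k)%N) (hkn : (k.+1 < n)%N) (hnm : (n <= m)%N)
  (g : 'I_n -> L) (hg : Fq_lin_indep q g)
  (a1 : L) (c : 'I_k -> L) :
  let sigma := fun j : 'I_n => fpoly q a1 c (g j) in
  dH_gab q k g sigma <> (n - k)%N <->
  exists s : 'I_k.+1 -> 'I_n, injective s /\
    a1 = \det (moore_R q (fun j => g (s j))) /
         \det (moore q k.+1 (fun j => g (s j))).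
Proof.
move=> sigma.
have q_gt0 := prime_power_gt0 hq.
have exprqD := prime_power_exprD hq hL.
have expr_qm (x : L) : x ^+ (q ^ m) = x by rewrite -hL expf_card.
have m_gt0 : (0 < m)%N by lia.
have moore_sub t (s : 'I_t -> 'I_n) : injective s -> moore q t (g \o s) \in unitmx.
  move=> s_inj; apply: (moore_unit q_gt0 exprqD m_gt0 expr_qm).
  exact: Fq_lin_indep_comp.
have le_kn : (k <= n)%N by lia.
have s0_inj : injective (widen_ord le_kn) by move=> i j /(congr1 val) /= /val_inj.
have [d0 hd0] := moore_interpolate (moore_sub _ _ s0_inj) (sigma \o widen_ord le_kn).
have dH_le : (dH_gab q k g sigma <= n - k)%N.
  exact: dH_gab_le_agree s0_inj (fun j => esym (hd0 j)).
split=> [ne_dH | [s [s_inj ha1]]].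
  have [|s s_inj [d hd]] := @dH_gab_lt_agree _ q k n g sigma k; first by lia.
  exists s; split => //; apply/(fpoly_eq_linev_iff a1 c (moore_sub _ _ s_inj)).
  by exists d.
have [d hd] := (fpoly_eq_linev_iff a1 c (moore_sub _ _ s_inj)).2 ha1.
by have := dH_gab_le_agree (g := g) (u := sigma) s_inj hd; lia.
Qed.
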